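(* Let $s_1,s_2$ be integers and $t,r_1,r_2$ nonnegative integers with $r_1\ge t$. Then in $\mathbb{Z}[x]$, $$\varphi^{s_1+t,\,s_2}_{r_1-t,\,r_2}(x)=\varphi^{s_1-t,\,s_2}_{r_1-t,\,r_2}(x)-\sum_{m=1}^{2t}\binom{2t}{m}\binom{r_1-t}{m}\,2^m\,m!\;\varphi^{s_1+t,\,s_2}_{r_1-t-m,\,r_2}(x).$$
   Context: For integers $a,b$ and integers $n,m$ define the polynomial $$\varphi^{a,b}_{n,m}(x)=\prod_{j=0}^{n-1}\bigl(x^2-x-2(a+j)\bigr)\prod_{l=0}^{m-1}\bigl(x-(b+l)\bigr)$$ when $n,m\ge0$ (empty products equal $1$), and $\varphi^{a,b}_{n,m}(x)=0$ if $n<0$ or $m<0$. (In the paper this is written $\varphi^{a,b}_{2n+m}(x)$.) Binomial coefficients $\binom{N}{m}$ are $0$ when $m>N$. *)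

From HB Require Import structures.
From mathcomp Require Import all_boot all_order all_algebra.
Set Implicit Arguments. Unset Strict Implicit. Unset Printing Implicit Defensive.
Import Order.TTheory GRing.Theory Num.Theory.
Local Open Scope ring_scope.

Definition varphi (a b n m : int) : {poly int} :=
  if (0 <= n) && (0 <= m) then
    (\prod_(j < `|n|%N) ('X^2 - 'X - ((2 * (a + j%:Z))%:P)))
    * (\prod_(l < `|m|%N) ('X - (b + l%:Z)%:P))
  else 0.

(* The factors of varphi^{a,b}_{n,m} attached to the parameter a are the
   polynomials F(c) = x^2 - x - 2c for c = a, ..., a + n - 1.  Lowering a by
   one replaces the last factor F(a + n - 1) by F(a - 1) = F(a + n - 1) + 2n,
   which gives a Pascal-type recurrence in a.  Iterating it 2t times expresses
   the product at a - 2t through the products at a of lengths n - m, with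
   coefficients C(2t, m) 2^m n(n-1)...(n-m+1); the m = 0 term is the left-hand
   side of the theorem (with a = s1 + t, n = r1 - t). *)

From HB Require Import structures.
From mathcomp Require Import all_boot all_order all_algebra.
From mathcomp Require Import ring zify.
Import Order.TTheory GRing.Theory Num.Theory.
Local Open Scope ring_scope.

Definition quad_prod (c : int) (n : nat) : {poly int} :=
  \prod_(j < n) ('X^2 - 'X - (2 * (c + j%:Z))%:P).

Lemma varphi_nat (a b : int) (n m : nat) :
  varphi a b n%:Z m%:Z = quad_prod a n * \prod_(l < m) ('X - (b + l%:Z)%:P).
Proof. by []. Qed.

Lemma quad_prod_predS (c : int) (n : nat) :
  quad_prod (c - 1) n.+1 = quad_prod c n.+1 + (2 * n.+1)%N%:R * quad_prod c n.
Proof.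
rewrite /quad_prod big_ord_recl big_ord_recr /=.
under eq_bigr => j _ do have -> : c - 1 + (bump 0 j)%:Z = c + j%:Z by rewrite /bump; lia.
ring.
Qed.

Lemma quad_prod_pred (c : int) (n : nat) :
  quad_prod (c - 1) n = quad_prod c n + (2 * n)%N%:R * quad_prod c n.-1.
Proof.
case: n => [|n]; last exact: quad_prod_predS.
by rewrite /quad_prod !big_ord0 mul0r addr0.
Qed.

Definition shift_coef (k n m : nat) : nat := ('C(k, m) * 2 ^ m * n ^_ m)%N.

Lemma shift_coefSS (k n m : nat) :
  (shift_coef k.+1 n m.+1 = shift_coef k n m.+1 + shift_coef k n m * (2 * (n - m)))%N.
Proof. rewrite /shift_coef binS ffactnSr expnS; ring. Qed.

Lemma quad_prod_subn (k : nat) (c : int) (n : nat) :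
  quad_prod (c - k%:Z) n = \sum_(m < k.+1) (shift_coef k n m)%:R * quad_prod c (n - m).
Proof.
elim: k c => [|k IHk] c.
  by rewrite big_ord1 /shift_coef subr0 subn0 mul1r.
have -> : c - k.+1%:Z = (c - 1) - k%:Z by lia.
rewrite IHk.
under eq_bigr => m _ do rewrite quad_prod_pred mulrDr -subnS.
rewrite big_split /= [RHS]big_ord_recl [X in X + _]big_ord_recl /=.
under [in RHS]eq_bigr => m _ do rewrite shift_coefSS natrD mulrDl.
rewrite big_split /= -!addrA; congr (_ + (_ + _)).
- by rewrite /shift_coef !bin0.
- rewrite [RHS]big_ord_recr /= /shift_coef bin_small // !mul0n mul0r addr0.
  by apply: eq_bigr => m _; rewrite /bump leq0n add1n.
- by apply: eq_bigr => m _; rewrite /bump leq0n add1n !natrM mulrA.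
Qed.

Theorem lemma3p29 (s1 s2 : int) (t r1 r2 : nat) (Ht : (t <= r1)%N) :
  varphi (s1 + t%:Z) s2 (r1%:Z - t%:Z) r2%:Z =
  varphi (s1 - t%:Z) s2 (r1%:Z - t%:Z) r2%:Z
  - \sum_(1 <= m < (2 * t).+1)
      (('C(2 * t, m) * 'C(r1 - t, m) * 2 ^ m * m`!)%N)%:R
        * varphi (s1 + t%:Z) s2 (r1%:Z - t%:Z - m%:Z) r2%:Z.
Proof.
have -> : r1%:Z - t%:Z = (r1 - t)%N%:Z by lia.
have -> : s1 - t%:Z = (s1 + t%:Z) - (2 * t)%N%:Z by lia.
rewrite !varphi_nat quad_prod_subn big_ord_recl mulrDl -addrA.
rewrite /shift_coef bin0 ffactn0 !mul1n subn0 mul1r big_add1 big_mkord mulr_suml.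
rewrite -[LHS]addr0; congr (_ + _); apply/esym/eqP; rewrite subr_eq0; apply/eqP.
apply: eq_bigr => m _; rewrite lift0.
case: (leqP m.+1 (r1 - t)) => Hm.
  have -> : (r1 - t)%N%:Z - m.+1%:Z = (r1 - t - m.+1)%N%:Z by lia.
  by rewrite varphi_nat -bin_ffact mulrA; congr (_%:R * _ * _); ring.
by rewrite (bin_small Hm) (ffact_small Hm) !muln0 !mul0n !mul0r.
Qed.
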